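(* Let $\mathbf A$ be a nonzero $m\times n$ real matrix, $\mathbf B=[\mathbf b_1\ \cdots\ \mathbf b_\ell]$ an $m\times\ell$ real matrix, and $\mathbf D$ an $n\times n$ diagonal matrix with strictly positive diagonal. Let $r:=\mathrm{rank}([\mathbf A\ \mathbf B])-\mathrm{rank}(\mathbf A)$ (so $0\le r\le\ell$). Then $$v:=\min_{\mathbf c\in\mathbb R^n,\mathbf d\in\mathbb R^\ell}\Big\{(\mathbf A\mathbf c+\mathbf B\mathbf d)^\top(\mathbf A\mathbf D\mathbf A^\top)(\mathbf A\mathbf c+\mathbf B\mathbf d):\ \|\mathbf A\mathbf c+\mathbf B\mathbf d\|_2=1,\ \mathbf B^\top(\mathbf A\mathbf c+\mathbf B\mathbf d)\le\mathbf 0,\ \mathbf d\ge\mathbf 0\Big\}$$ satisfies $v\ge v_{\min}>0$, where $$v_{\min}:=\min_{\mathbf C}\big\{\lambda_{\min}^{++}(\mathbf A\mathbf D\mathbf A^\top+\mathbf C\mathbf C^\top):\ \mathbf C\text{ is an }m\times p\text{ submatrix of }\mathbf B\text{ formed by }p\text{ of its columns},\ r\le p\le\ell\big\}$$ (for $p=0$, $\mathbf C\mathbf C^\top$ is the zero matrix).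
   Context: For a nonzero symmetric positive semidefinite matrix $\mathbf S$, $\lambda_{\min}^{++}(\mathbf S)$ is its smallest strictly positive eigenvalue. Vector inequalities are componentwise. *)

(* Real matrices are taken over an arbitrary real closed field R : rcfType. *)
From HB Require Import structures.
From mathcomp Require Import all_boot all_order all_algebra.
Set Implicit Arguments. Unset Strict Implicit. Unset Printing Implicit Defensive.
Import Order.TTheory GRing.Theory Num.Theory.
Local Open Scope ring_scope.

Definition is_lambda_min_pp (R : rcfType) (m : nat) (S : 'M[R]_m) (l : R) : Prop :=
  [/\ eigenvalue S l, 0 < l & forall a : R, eigenvalue S a -> 0 < a -> l <= a].

(* The m x #|J| submatrix of B formed by the columns with indices in J
   (in increasing order of index). *)
Definition colsubset (R : rcfType) (m l : nat) (B : 'M[R]_(m, l)) (J : {set 'I_l})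
  : 'M[R]_(m, #|J|) := mxsub id (@enum_val _ (mem J)) B.

Definition norm2 (R : rcfType) (m : nat) (x : 'cV[R]_m) : R :=
  Num.sqrt (\sum_i x i 0 ^+ 2).

(* Write M = A D A^T and S_J = M + B_J B_J^T for a set J of columns of B.
   - PsdSpectral: a nonzero symmetric positive semidefinite S has a smallest
     positive eigenvalue lambda, and lambda |y|^2 <= y^T S y whenever y is
     orthogonal to ker S (spectral theorem for the Hermitian complexification).
   - DiagonalGram: every S_J is symmetric, PSD, nonzero (as A != 0), with
     kernel ker A^T /\ ker B_J^T.  So each lambda_min^{++}(S_J) exists and
     v_min, a minimum over finitely many J, exists and is positive.
   - ColumnSelection (Caratheodory): a feasible x = A c + B d, d >= 0, is also
     A c' + B_J e with e >= 0 and the columns of B_J independent modulo col(A);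
     J can be taken maximal, which forces every column of B into
     col(A) + col(B_J), hence |J| >= r.
   - Projection: then x moves to y = x + k with k in col(A) + col(B_J),
     A^T k = 0 and B_J^T y = 0; y is orthogonal to ker S_J, |y| >= |x| = 1
     (using e >= 0 and B^T x <= 0) and y^T S_J y = x^T M x.  Therefore
     x^T M x >= lambda_min^{++}(S_J) >= v_min. *)

From HB Require Import structures.
From mathcomp Require Import all_boot all_order all_algebra.
From mathcomp Require Import complex zify.
From Stdlib Require Import Classical.
Set Implicit Arguments. Unset Strict Implicit. Unset Printing Implicit Defensive.
Import Order.TTheory GRing.Theory Num.Theory.
Local Open Scope ring_scope.

Section RealQuadratic.
Variable R : realFieldType.

Lemma row_sqnorm k (v : 'rV[R]_k) : (v *m v^T) 0 0 = \sum_j v 0 j ^+ 2.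
Proof. by rewrite mxE; apply: eq_bigr => j _; rewrite mxE expr2. Qed.

Lemma col_sqnorm k (u : 'cV[R]_k) : (u^T *m u) 0 0 = \sum_i u i 0 ^+ 2.
Proof. by rewrite mxE; apply: eq_bigr => i _; rewrite mxE expr2. Qed.

Lemma col_sqnorm_ge0 k (u : 'cV[R]_k) : 0 <= (u^T *m u) 0 0.
Proof. by rewrite col_sqnorm sumr_ge0 // => i _; rewrite sqr_ge0. Qed.

Lemma row_sqnorm_gt0 k (v : 'rV[R]_k) : v != 0 -> 0 < (v *m v^T) 0 0.
Proof.
move=> vN0; rewrite row_sqnorm lt_def sumr_ge0 ?andbT => [|j _]; last exact: sqr_ge0.
apply: contra vN0; rewrite psumr_eq0 => [/allP v0|j _]; last exact: sqr_ge0.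
apply/eqP/rowP => j; rewrite mxE; apply/eqP.
by rewrite -sqrf_eq0; apply: v0; rewrite mem_index_enum.
Qed.

Lemma dotC k (u v : 'cV[R]_k) : (u^T *m v) 0 0 = (v^T *m u) 0 0.
Proof. by rewrite !mxE; apply: eq_bigr => i _; rewrite !mxE mulrC. Qed.

Lemma col_sqnormD k (u v : 'cV[R]_k) :
  ((u + v)^T *m (u + v)) 0 0 = (u^T *m u) 0 0 + 2 * (u^T *m v) 0 0 + (v^T *m v) 0 0.
Proof.
have add11 (X Y : 'M[R]_1) : (X + Y) 0 0 = X 0 0 + Y 0 0 by rewrite mxE.
rewrite [(u + v)^T]linearD /= mulmxDl !mulmxDr !add11 (dotC v u).
by rewrite mulr2n mulrDl mul1r !addrA.
Qed.

(* A Gram matrix has the same left kernel as its factor: v X X^T = 0 forces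
   |v X|^2 = 0. *)
Lemma gram_kernel a b (X : 'M[R]_(a, b)) (v : 'rV_a) :
  v *m (X *m X^T) = 0 -> v *m X = 0.
Proof.
move=> h; apply/eqP/negPn/negP => /row_sqnorm_gt0.
by rewrite trmx_mul mulmxA -(mulmxA v) h mul0mx mxE ltxx.
Qed.

(* Consequently X^T lies in the row space of X X^T (the two row spaces are
   equal, as their ranks agree). *)
Lemma gram_rowspace a b (X : 'M[R]_(a, b)) : (X^T <= X *m X^T)%MS.
Proof.
have sub_tr : (X *m X^T <= X^T)%MS by apply: submxMl.
have ker_sub : (kermx (X *m X^T) <= kermx X)%MS.
  apply/sub_kermxP/row_matrixP => i; rewrite row_mul row0.
  by apply: gram_kernel; rewrite -row_mul mulmx_ker row0.
have := mxrankS ker_sub; rewrite !mxrank_ker => rk_le.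
have := mxrank_leqif_sup sub_tr => -[_ <-].
have rk_ge := mxrankS sub_tr.
have := rank_leq_row X; have := rank_leq_row (X *m X^T).
rewrite mxrank_tr in rk_ge *; lia.
Qed.

Lemma quad_ker_invariant k (S : 'M[R]_k) (x y : 'cV_k) :
  S^T = S -> S *m (y - x) = 0 -> (y^T *m S *m y) 0 0 = (x^T *m S *m x) 0 0.
Proof.
move=> Ssym Syx.
have Sy : S *m y = S *m x by apply/eqP; rewrite -subr_eq0 -mulmxBr Syx.
have swap : (y^T *m (S *m x)) 0 0 = (x^T *m (S *m y)) 0 0.
  by rewrite dotC trmx_mul Ssym -mulmxA.
by rewrite -!mulmxA [in LHS]Sy swap Sy.
Qed.

End RealQuadratic.

Lemma norm2_eq1 (R : rcfType) k (x : 'cV[R]_k) :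
  norm2 x = 1 -> (x^T *m x) 0 0 = 1.
Proof.
rewrite /norm2 col_sqnorm => nx1.
have s_ge0 : 0 <= \sum_i x i 0 ^+ 2 by rewrite sumr_ge0 // => i _; rewrite sqr_ge0.
by rewrite -(sqr_sqrtr s_ge0) nx1 expr1n.
Qed.

(* They
   are obtained from the spectral decomposition SC = P^-1 diag(mu) P of the
   complexification SC of S, which is Hermitian: P is unitary and mu is real. *)
Section PsdSpectral.
Local Open Scope sesquilinear_scope.
Variables (R : rcfType) (n : nat) (S : 'M[R]_n).
Hypothesis S_sym : S^T = S.
Hypothesis S_psd : forall v : 'rV_n, 0 <= (v *m S *m v^T) 0 0.

Local Notation toC := (real_complex R).
Let SC : 'M[R[i]]_n := map_mx toC S.
Let P := spectralmx SC.
Let mu := spectral_diag SC.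

Lemma complexified_hermitian : SC \is hermsymmx.
Proof.
apply: realsym_hermsym.
  apply/is_hermitianmxP; rewrite expr0 scale1r map_mx_id // /SC.
  by rewrite map_trmx S_sym.
by apply/mxOverP => i j; rewrite mxE complex_real.
Qed.

Let SC_spectral : SC = invmx P *m diag_mx mu *m P.
Proof. exact/orthomx_spectralP/hermitian_normalmx/complexified_hermitian. Qed.

Let P_unit : P \in unitmx.
Proof. exact: spectral_unit. Qed.

Let P_unitary : P *m P^t* = 1%:M.
Proof. exact/unitarymxP/spectral_unitarymx. Qed.

Let invP : invmx P = P^t*.
Proof. by rewrite invmx_unitary // spectral_unitarymx. Qed.

Let SC_invP : SC *m invmx P = invmx P *m diag_mx mu.
Proof. by rewrite SC_spectral -!mulmxA mulmxV // mulmx1. Qed.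

Let muE i : toC (complex.Re (mu 0 i)) = mu 0 i.
Proof.
rewrite RRe_real //.
by have /mxOverP := hermitian_spectral_diag_real complexified_hermitian; apply.
Qed.

(* Every spectral value of SC is a (real) eigenvalue of S: row i of P is an
   eigenvector of SC, and eigenvalues are the roots of the characteristic
   polynomial, which is preserved by the embedding R -> R[i]. *)
Lemma spectral_eigenvalue i : eigenvalue S (complex.Re (mu 0 i)).
Proof.
rewrite eigenvalue_root_char -(fmorph_root toC) map_char_poly -/SC.
suff : root (char_poly SC) (mu 0 i) by rewrite -muE.
rewrite -eigenvalue_root_char; apply/eigenvalueP; exists (row i P).
  have PSC : P *m SC = diag_mx mu *m P.
    by rewrite SC_spectral !mulmxA mulmxV // mul1mx.
  by rewrite -row_mul PSC mul_diag_mx; apply/rowP => j; rewrite !mxE.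
apply/negP => /eqP Pi0.
have : row i (P *m invmx P) = 0 by rewrite row_mul Pi0 mul0mx.
by move/rowP/(_ i); rewrite mulmxV // !mxE eqxx => /eqP; rewrite oner_eq0.
Qed.

(* Conversely every eigenvalue of S is a spectral value of SC: the image of an
   eigenvector under P^-1 is an eigenvector of diag(mu). *)
Lemma eigenvalue_spectral a : eigenvalue S a -> exists i, mu 0 i = toC a.
Proof.
move=> /eigenvalueP [v Sv vN0].
pose w := map_mx toC v *m invmx P.
have wmu : w *m diag_mx mu = toC a *: w.
  by rewrite /w -mulmxA -SC_invP mulmxA /SC -map_mxM Sv map_mxZ scalemxAl.
have [j wj] : exists j, w 0 j != 0.
  apply/rV0Pn; apply: contra vN0 => /eqP w0.
  by rewrite -(map_mx_eq0 toC) -[map_mx _ _](mulmxKV P_unit) -/w w0 mul0mx.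
exists j; move/rowP: wmu => /(_ j); rewrite mul_mx_diag !mxE mulrC => /mulIf.
by apply; move: wj; rewrite mxE.
Qed.

Lemma psd_eigenvalue_ge0 a : eigenvalue S a -> 0 <= a.
Proof.
move=> /eigenvalueP [v Sv vN0]; have := S_psd v.
by rewrite Sv -scalemxAl mxE pmulr_lge0 // row_sqnorm_gt0.
Qed.

Let spectral_pos i : mu 0 i != 0 -> 0 < complex.Re (mu 0 i).
Proof.
move=> muN0; rewrite lt_def psd_eigenvalue_ge0 ?spectral_eigenvalue // andbT.
by apply: contra muN0 => /eqP Re0; rewrite -muE Re0 raddf0.
Qed.

(* A nonzero symmetric PSD matrix has a smallest positive eigenvalue: the
   least positive spectral value. *)
Lemma lambda_min_pp_exists : S != 0 -> exists lam, is_lambda_min_pp S lam.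
Proof.
move=> SN0; pose a i := complex.Re (mu 0 i).
have [i0 mu_i0] : exists i, mu 0 i != 0.
  apply/rV0Pn; apply: contra SN0 => /eqP mu0.
  by rewrite -(map_mx_eq0 toC) -/SC SC_spectral mu0 raddf0 mulmx0 mul0mx.
have [i1 a_i1 a_min] := @arg_minP _ _ _ i0 (fun i => 0 < a i) a (spectral_pos mu_i0).
exists (a i1); split => //; first exact: spectral_eigenvalue.
move=> b /eigenvalue_spectral [j mu_j] b_gt0.
have -> : b = a j by rewrite /a mu_j.
by apply: a_min; rewrite /a mu_j.
Qed.

(* Coordinates of a real row vector in the orthonormal eigenbasis (rows of P). *)
Let eigen_coords (u : 'rV[R]_n) := map_mx toC u *m P^t*.

Let map_trmx_conj (u : 'rV[R]_n) : map_mx toC u^T = (map_mx toC u)^t*.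
Proof. by apply/matrixP => i j; rewrite !mxE conj_Creal ?complex_real. Qed.

Let eigen_coordsK (u : 'rV[R]_n) : map_mx toC u = eigen_coords u *m P.
Proof. by rewrite /eigen_coords -invP mulmxKV. Qed.

(* Parseval: P is unitary, so the squared norm is that of the coordinates. *)
Let sqnorm_eigen (u : 'rV[R]_n) :
  toC ((u *m u^T) 0 0) = (eigen_coords u *m (eigen_coords u)^t*) 0 0.
Proof.
have -> : eigen_coords u *m (eigen_coords u)^t* = map_mx toC u *m (map_mx toC u)^t*.
  rewrite [in RHS]eigen_coordsK [in RHS]trmx_mul [in RHS]map_mxM !mulmxA.
  by rewrite -(mulmxA (eigen_coords u)) P_unitary mulmx1.
by rewrite -map_trmx_conj -map_mxM [RHS]mxE.
Qed.

Let quad_eigen (u : 'rV[R]_n) :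
  toC ((u *m S *m u^T) 0 0) = (eigen_coords u *m diag_mx mu *m (eigen_coords u)^t*) 0 0.
Proof.
have -> : eigen_coords u *m diag_mx mu *m (eigen_coords u)^t* =
          map_mx toC u *m SC *m (map_mx toC u)^t*.
  rewrite [in RHS]eigen_coordsK SC_spectral [in RHS]trmx_mul [in RHS]map_mxM.
  rewrite !mulmxA mulmxK // -(mulmxA (eigen_coords u *m diag_mx mu)) P_unitary.
  by rewrite mulmx1.
by rewrite -map_trmx_conj /SC -!map_mxM [RHS]mxE.
Qed.

Let rowspace_coords (z : 'rV[R]_n) j : mu 0 j = 0 -> eigen_coords (z *m S) 0 j = 0.
Proof.
move=> mu0; have -> : eigen_coords (z *m S) = (map_mx toC z *m invmx P) *m diag_mx mu.
  by rewrite /eigen_coords map_mxM -/SC -invP -mulmxA SC_invP mulmxA.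
by rewrite mul_mx_diag mxE mu0 mulr0.
Qed.

(* On the row space of S the quadratic form of S dominates lambda |.|^2:
   compare the two diagonal forms coordinatewise. *)
Lemma lambda_min_pp_rowspace lam (z : 'rV_n) : is_lambda_min_pp S lam ->
  lam * ((z *m S) *m (z *m S)^T) 0 0 <= ((z *m S) *m S *m (z *m S)^T) 0 0.
Proof.
move=> [_ lam_gt0 lam_min]; rewrite -lecR rmorphM /= sqnorm_eigen quad_eigen.
have := rowspace_coords z; set w := eigen_coords (z *m S) => w_ker; clearbody w.
rewrite mxE [X in _ <= X]mxE mulr_sumr; apply: ler_sum => j _.
rewrite mul_mx_diag !mxE.
have [mu0|muN0] := eqVneq (mu 0 j) 0; first by rewrite w_ker // !mul0r mulr0.
have lam_le := lam_min _ (spectral_eigenvalue j) (spectral_pos muN0).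
rewrite -muE [X in _ <= X]mulrAC [X in _ <= X]mulrC.
by apply: ler_wpM2r; [exact: mul_conjC_ge0 | rewrite lecR].
Qed.

(* The same bound holds for every y orthogonal to ker S, since such a y lies
   in the row space of the symmetric matrix S. *)
Lemma lambda_min_pp_ker_orth lam (y : 'cV_n) : is_lambda_min_pp S lam ->
  (forall v : 'cV_n, S *m v = 0 -> (y^T *m v) 0 0 = 0) ->
  lam * (y^T *m y) 0 0 <= (y^T *m S *m y) 0 0.
Proof.
move=> lam_pp y_orth.
have : (y^T <= S)%MS.
  rewrite submxE; apply/eqP/rowP => j.
  have := y_orth (cokermx S *m delta_mx j 0).
  rewrite mulmxA mulmx_coker mul0mx => /(_ erefl).
  by rewrite mulmxA -colE !mxE.
case/submxP => z yz.
by have := lambda_min_pp_rowspace z lam_pp; rewrite -yz trmxK.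
Qed.

End PsdSpectral.

Lemma lambda_min_pp_unique (R : rcfType) k (S : 'M[R]_k) l1 l2 :
  is_lambda_min_pp S l1 -> is_lambda_min_pp S l2 -> l1 = l2.
Proof.
move=> [e1 p1 m1] [e2 p2 m2]; apply/eqP.
by rewrite eq_le (m1 _ e2 p2) (m2 _ e1 p1).
Qed.

Section DiagonalGram.
Variables (R : realFieldType) (m n : nat) (A : 'M[R]_(m, n)) (D : 'M[R]_n).
Hypothesis D_diag : forall i j : 'I_n, i != j -> D i j = 0.
Hypothesis D_pos : forall i : 'I_n, 0 < D i i.

Lemma diag_sym : D^T = D.
Proof.
apply/matrixP => i j; rewrite mxE.
by have [->//|ij] := eqVneq i j; rewrite !D_diag // eq_sym.
Qed.

Lemma diag_quad (w : 'rV[R]_n) : (w *m D *m w^T) 0 0 = \sum_k D k k * w 0 k ^+ 2.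
Proof.
rewrite mxE; apply: eq_bigr => j _; rewrite mxE (bigD1 j) //= big1 => [|k kj].
  by rewrite addr0 !mxE mulrAC mulrC expr2 mulrA.
by rewrite D_diag ?mulr0.
Qed.

Lemma gram_sum_quad p (C : 'M[R]_(m, p)) (v : 'rV_m) :
  (v *m (A *m D *m A^T + C *m C^T) *m v^T) 0 0 =
  \sum_k D k k * (v *m A) 0 k ^+ 2 + \sum_k (v *m C) 0 k ^+ 2.
Proof.
rewrite mulmxDr mulmxDl mxE -diag_quad -row_sqnorm.
by rewrite !trmx_mul !mulmxA.
Qed.

Lemma gram_sum_sym p (C : 'M[R]_(m, p)) :
  (A *m D *m A^T + C *m C^T)^T = A *m D *m A^T + C *m C^T.
Proof. by rewrite linearD /= !trmx_mul !trmxK diag_sym mulmxA. Qed.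

Lemma gram_sum_psd p (C : 'M[R]_(m, p)) (v : 'rV_m) :
  0 <= (v *m (A *m D *m A^T + C *m C^T) *m v^T) 0 0.
Proof.
rewrite gram_sum_quad addr_ge0 // sumr_ge0 // => k _; last exact: sqr_ge0.
by rewrite mulr_ge0 ?sqr_ge0 ?ltW.
Qed.

Lemma gram_sum_kernel p (C : 'M[R]_(m, p)) (u : 'rV_m) :
  u *m (A *m D *m A^T + C *m C^T) = 0 -> u *m A = 0 /\ u *m C = 0.
Proof.
move=> uS0; have := gram_sum_quad C u; rewrite uS0 mul0mx mxE => /esym/eqP.
have termA_ge0 k : 0 <= D k k * (u *m A) 0 k ^+ 2 by rewrite mulr_ge0 ?sqr_ge0 ?ltW.
rewrite paddr_eq0 ?sumr_ge0 // => [|k _]; last exact: sqr_ge0.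
rewrite !psumr_eq0 // => [/andP [/allP uA0 /allP uC0]|k _]; last exact: sqr_ge0.
split; apply/rowP => k; rewrite [RHS]mxE; apply/eqP.
  by move: (uA0 k (mem_index_enum _)); rewrite mulf_eq0 sqrf_eq0 gt_eqF.
by rewrite -sqrf_eq0; apply: uC0; rewrite mem_index_enum.
Qed.

Lemma gram_sum_neq0 p (C : 'M[R]_(m, p)) : A != 0 -> A *m D *m A^T + C *m C^T != 0.
Proof.
apply: contraNneq => S0; apply/eqP/row_matrixP => i.
have := @gram_sum_kernel p C (delta_mx 0 i); rewrite S0 mulmx0 => /(_ erefl) [eiA0 _].
by rewrite rowE eiA0 row0.
Qed.

End DiagonalGram.

Section ColumnSelection.
Variables (R : rcfType) (m n l : nat) (A : 'M[R]_(m, n)) (B : 'M[R]_(m, l)).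

Definition supp (d : 'cV[R]_l) : {set 'I_l} := [set j | d j 0 != 0].

Definition indep_mod (J : {set 'I_l}) : Prop :=
  forall a : 'cV[R]_l, (forall j, j \notin J -> a j 0 = 0) ->
    (exists g : 'cV_n, B *m a = A *m g) -> a = 0.

Lemma dependence_witness (J : {set 'I_l}) : ~ indep_mod J ->
  exists (b : 'cV[R]_l) (g : 'cV[R]_n), [/\ forall j, j \notin J -> b j 0 = 0,
    B *m b = A *m g & exists j, 0 < b j 0].
Proof.
move=> not_indep.
have [a [a_supp [g Bag] aN0]] : exists a : 'cV_l, [/\ forall j, j \notin J -> a j 0 = 0,
    exists g : 'cV_n, B *m a = A *m g & a != 0].
  apply: NNPP => no_dep; apply: not_indep => a a_supp a_dep.
  by apply/eqP/negPn/negP => aN0; apply: no_dep; exists a.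
have [j0 aj0] := cV0Pn _ aN0; have [a_pos|a_neg|a_eq0] := ltgtP 0 (a j0 0).
- by exists a, g; split => //; exists j0.
- exists (- a), (- g); split; last by exists j0; rewrite mxE oppr_gt0.
    by move=> j /a_supp; rewrite mxE => ->; rewrite oppr0.
  by rewrite !mulmxN Bag.
- by rewrite -a_eq0 eqxx in aj0.
Qed.

(* Carathéodory step: a nonnegative d with dependent support can be replaced
   by a nonnegative d2 of strictly smaller support, changing B d only by an
   element of col(A): move along the dependence until a coefficient hits 0. *)
Lemma caratheodory_step (d : 'cV[R]_l) (c : 'cV[R]_n) :
  (forall j, 0 <= d j 0) -> ~ indep_mod (supp d) ->
  exists (c2 : 'cV[R]_n) (d2 : 'cV[R]_l), [/\ forall j, 0 <= d2 j 0,
    supp d2 \proper supp d & A *m c + B *m d = A *m c2 + B *m d2].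
Proof.
move=> d_ge0 /dependence_witness [b [g [b_supp Bbg [j0 bj0]]]].
pose ratio j := d j 0 / b j 0.
have [j1 bj1 ratio_min] := @arg_minP _ _ _ j0 (fun j => 0 < b j 0) ratio bj0.
pose t := ratio j1; pose d2 := d - t *: b.
have t_ge0 : 0 <= t by rewrite divr_ge0 // ltW.
have b_out j : d j 0 = 0 -> b j 0 = 0 by move=> dj0; apply: b_supp; rewrite inE dj0 eqxx.
exists (c + t *: g), d2; split.
- move=> j; rewrite !mxE subr_ge0; have [bj_gt0|bj_le0] := ltP 0 (b j 0).
    by have := ratio_min j bj_gt0; rewrite ler_pdivlMr.
  exact: le_trans (mulr_ge0_le0 t_ge0 bj_le0) (d_ge0 j).
- apply/properP; split.
    apply/subsetP => j; rewrite !inE; apply: contraNneq => dj0.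
    by rewrite !mxE dj0 b_out // mulr0 subr0.
  exists j1; last by rewrite inE negbK !mxE divfK ?subrr // gt_eqF.
  by rewrite inE; apply: contraTneq bj1 => /b_out ->; rewrite ltxx.
- by rewrite /d2 mulmxDr mulmxBr -!scalemxAr Bbg addrACA subrr addr0.
Qed.

Lemma caratheodory (d : 'cV[R]_l) (c : 'cV[R]_n) : (forall j, 0 <= d j 0) ->
  exists (c' : 'cV[R]_n) (d' : 'cV[R]_l), [/\ forall j, 0 <= d' j 0,
    A *m c + B *m d = A *m c' + B *m d' & indep_mod (supp d')].
Proof.
have [k] := ubnP #|supp d|; elim: k d c => // k IH d c supp_lt d_ge0.
have [indep_d|dep_d] := classic (indep_mod (supp d)); first by exists c, d.
have [c2 [d2 [d2_ge0 supp_sub ->]]] := caratheodory_step c d_ge0 dep_d.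
by apply: IH d2_ge0; apply: leq_trans (proper_card supp_sub) _.
Qed.

Lemma indep_extend (J : {set 'I_l}) : indep_mod J ->
  exists J' : {set 'I_l}, [/\ J \subset J', indep_mod J' &
    forall j, j \notin J' -> ~ indep_mod (j |: J')].
Proof.
have [k] := ubnP #|~: J|; elim: k J => // k IH J compl_lt indep_J.
have [[j [jJ indep_jJ]]|maximal] :=
  classic (exists j, j \notin J /\ indep_mod (j |: J)); last first.
  by exists J; split => // j jJ indep_jJ; apply: maximal; exists j.
have grow : ~: (j |: J) \proper ~: J by rewrite properC properUr // sub1set.
have [J' [sub_J' indep_J' max_J']] :=
  IH _ (leq_trans (proper_card grow) compl_lt) indep_jJ.
by exists J'; split => //; apply: subset_trans sub_J'; apply: subsetUr.
Qed.

Lemma colsubset_mul (J : {set 'I_l}) (a : 'cV[R]_l) :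
  (forall j, j \notin J -> a j 0 = 0) ->
  B *m a = colsubset B J *m (\col_k a (enum_val k) 0).
Proof.
move=> a_supp; apply/colP => i; rewrite !mxE (bigID (mem J)) /=.
rewrite [X in _ + X]big1 ?addr0 => [|j /a_supp ->]; last by rewrite mulr0.
by rewrite big_enum_val; apply: eq_bigr => k _; rewrite !mxE.
Qed.

Lemma colsubset_trmx_mul (J : {set 'I_l}) (x : 'cV[R]_m) (k : 'I_#|J|) :
  ((colsubset B J)^T *m x) k 0 = (B^T *m x) (enum_val k) 0.
Proof. by rewrite !mxE; apply: eq_bigr => i _; rewrite !mxE. Qed.

Lemma indep_colsubset (J : {set 'I_l}) : indep_mod J ->
  forall b : 'cV_#|J|, (exists g : 'cV_n, colsubset B J *m b = A *m g) -> b = 0.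
Proof.
move=> indep_J b [g BJbg].
pose a : 'cV[R]_l := \col_j \sum_(k | enum_val k == j) b k 0.
have a_supp j : j \notin J -> a j 0 = 0.
  move=> jJ; rewrite mxE big1 // => k /eqP ek.
  by move: (enum_valP k); rewrite ek (negbTE jJ).
have ab : \col_k a (enum_val k) 0 = b.
  apply/colP => k; rewrite !mxE (eq_bigl (pred1 k)) ?big_pred1_eq // => k'.
  by rewrite /= (inj_eq enum_val_inj).
have a0 : a = 0 by apply: indep_J => //; exists g; rewrite (colsubset_mul a_supp) ab.
by rewrite -ab a0; apply/colP => k; rewrite !mxE.
Qed.

Lemma maximal_indep_span (J : {set 'I_l}) : indep_mod J ->
  (forall j, j \notin J -> ~ indep_mod (j |: J)) ->
  forall j, exists (g : 'cV[R]_n) (a : 'cV[R]_l),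
    (forall i, i \notin J -> a i 0 = 0) /\ col j B = A *m g + B *m a.
Proof.
move=> indep_J max_J j; have [jJ|jJ] := boolP (j \in J).
  exists 0, (delta_mx j 0); split; last by rewrite mulmx0 add0r colE.
  by move=> i iJ; rewrite mxE; case: eqP => // ij; rewrite ij jJ in iJ.
have [b [g [b_supp Bbg [j0 b_pos]]]] := dependence_witness (max_J j jJ).
have bj : b j 0 != 0.
  apply/negP => /eqP bj0; suff b0 : b = 0 by move: b_pos; rewrite b0 mxE ltxx.
  apply: indep_J; last by exists g.
  move=> i iJ; have [->//|ij] := eqVneq i j; apply: b_supp.
  by rewrite !inE negb_or ij.
exists ((b j 0)^-1 *: g), (- (b j 0)^-1 *: (b - b j 0 *: delta_mx j 0)); split.
  move=> i iJ; rewrite !mxE; have [->|ij] := eqVneq i j.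
    by rewrite eqxx mulr1 subrr mulr0.
  by rewrite mulr0 subr0 (b_supp i) ?mulr0 // !inE negb_or ij.
rewrite -scalemxAr -Bbg scaleNr mulmxN -scalemxAr mulmxBr -scalemxAr -colE.
by rewrite scalerBr scalerA mulVf // scale1r opprB addrC subrK.
Qed.

Lemma rank_gap_le (J : {set 'I_l}) :
  (forall j, exists (g : 'cV[R]_n) (a : 'cV[R]_l),
    (forall i, i \notin J -> a i 0 = 0) /\ col j B = A *m g + B *m a) ->
  (\rank (row_mx A B) - \rank A <= #|J|)%N.
Proof.
move=> span_J; set C := colsubset B J.
have B_sub : (B^T <= A^T + C^T)%MS.
  apply/row_subP => j; rewrite -tr_col.
  have [g [a [a_supp ->]]] := span_J j.
  rewrite (colsubset_mul a_supp) linearD /= !trmx_mul.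
  by apply: addmx_sub_adds; apply: submxMl.
have rk_AB : \rank (row_mx A B) = \rank (A^T + B^T)%MS.
  by rewrite -mxrank_tr tr_row_mx -addsmxE.
have := mxrankS (_ : (A^T + B^T <= A^T + C^T)%MS); rewrite addsmx_sub addsmxSl B_sub.
have [rk_sum _] := mxrank_adds_leqif A^T C^T.
have := rank_leq_row C^T; rewrite mxrank_tr in rk_sum; rewrite rk_AB; lia.
Qed.

Lemma feasible_reduction (c : 'cV[R]_n) (d : 'cV[R]_l) : (forall j, 0 <= d j 0) ->
  exists (J : {set 'I_l}) (c' : 'cV[R]_n) (e : 'cV[R]_#|J|),
    [/\ (\rank (row_mx A B) - \rank A <= #|J|)%N,
        A *m c + B *m d = A *m c' + colsubset B J *m e,
        forall k, 0 <= e k 0 &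
        forall b : 'cV_#|J|, (exists g : 'cV_n, colsubset B J *m b = A *m g) -> b = 0].
Proof.
move=> d_ge0; have [c' [d' [d'_ge0 -> indep_d']]] := caratheodory c d_ge0.
have [J [sub_J indep_J max_J]] := indep_extend indep_d'.
have d'_supp j : j \notin J -> d' j 0 = 0.
  by move=> jJ; apply/eqP; apply: contraNT jJ => dj; apply: (subsetP sub_J); rewrite inE.
exists J, c', (\col_k d' (enum_val k) 0); split.
- exact/rank_gap_le/maximal_indep_span.
- by rewrite (colsubset_mul d'_supp).
- by move=> k; rewrite mxE.
- exact: indep_colsubset.
Qed.

End ColumnSelection.

(* C has columns independent modulo col(A); a point
   x = A c + C e with e >= 0 and C^T x <= 0 is moved to y = x + k, with k in
   col(A) + col(C) chosen so that A^T k = 0 and C^T y = 0. *)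
Section Projection.
Variables (R : realFieldType) (m n p : nat) (A : 'M[R]_(m, n)) (C : 'M[R]_(m, p)).
Hypothesis C_indep :
  forall b : 'cV_p, (exists g : 'cV_n, C *m b = A *m g) -> b = 0.

(* Residual of the columns of C after orthogonal projection onto col(A). *)
Lemma colspace_residual : exists G : 'M[R]_(n, p), A^T *m (C - A *m G) = 0.
Proof.
have : (C^T *m A <= A^T *m A)%MS.
  by apply: submx_trans (submxMl _ _) _; have := gram_rowspace A^T; rewrite trmxK.
case/submxP => Q CA_QAA; exists Q^T.
have := congr1 trmx CA_QAA; rewrite !trmx_mul !trmxK => AC_AAQ.
by rewrite mulmxBr mulmxA AC_AAQ subrr.
Qed.

Lemma residual_gram_unit (G : 'M[R]_(n, p)) :
  (C - A *m G)^T *m (C - A *m G) \in unitmx.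
Proof.
set C' := C - A *m G.
rewrite -row_free_unit -kermx_eq0; apply/eqP/row_matrixP => i; rewrite row0.
set v := row i (kermx _).
have vC' : v *m C'^T = 0.
  by apply: gram_kernel; rewrite trmxK /v -row_mul mulmx_ker row0.
suff vT0 : v^T = 0 by rewrite -[v]trmxK vT0 trmx0.
apply: C_indep; exists (G *m v^T).
have := congr1 trmx vC'; rewrite trmx_mul trmxK trmx0 mulmxBl mulmxA.
by move/eqP; rewrite subr_eq0 => /eqP.
Qed.

Lemma feasible_lift (x : 'cV[R]_m) (c : 'cV[R]_n) (e : 'cV[R]_p) :
  x = A *m c + C *m e -> (forall k, 0 <= e k 0) -> (forall k, (C^T *m x) k 0 <= 0) ->
  exists y : 'cV_m, [/\ A^T *m (y - x) = 0, C^T *m y = 0,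
     (x^T *m x) 0 0 <= (y^T *m y) 0 0 &
     forall v : 'cV_m, A^T *m v = 0 -> C^T *m v = 0 -> (y^T *m v) 0 0 = 0].
Proof.
move=> xE e_ge0 Cx_le0.
have [G AC'0] := colspace_residual; set C' := C - A *m G in AC'0.
pose k := C' *m - (invmx (C'^T *m C') *m (C^T *m x)).
have Ak0 : A^T *m k = 0 by rewrite /k mulmxA AC'0 mul0mx.
have Ck : C^T *m k = - (C^T *m x).
  have CtC' : C^T *m C' = C'^T *m C'.
    have C_split : C = C' + A *m G by rewrite /C' subrK.
    rewrite {1}C_split [(C' + _)^T]linearD /= mulmxDl trmx_mul -mulmxA AC'0.
    by rewrite mulmx0 addr0.
  by rewrite /k mulmxA CtC' mulmxN mulKVmx ?residual_gram_unit.
(* x^T k = e^T C^T k = - e^T C^T x >= 0 since e >= 0 and C^T x <= 0. *)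
have xk_ge0 : 0 <= (x^T *m k) 0 0.
  rewrite {1}xE linearD /= !trmx_mul mulmxDl -!mulmxA Ak0 Ck mulmx0 add0r.
  rewrite mulmxN mxE oppr_ge0 mxE; apply: sumr_le0 => i _.
  by rewrite mxE mulr_ge0_le0.
exists (x + k); split.
- by rewrite addrC addKr.
- by rewrite mulmxDr Ck subrr.
- by rewrite col_sqnormD -addrA lerDl addr_ge0 ?mulr_ge0 ?col_sqnorm_ge0.
- move=> v Av0 Cv0.
  have C'v0 : C'^T *m v = 0.
    by rewrite linearB /= mulmxBl trmx_mul -mulmxA Av0 Cv0 mulmx0 subr0.
  have xv0 : x^T *m v = 0.
    by rewrite xE [(_ + _)^T]linearD /= mulmxDl !trmx_mul -!mulmxA Av0 Cv0 !mulmx0 addr0.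
  have kv0 : k^T *m v = 0 by rewrite /k trmx_mul -mulmxA C'v0 mulmx0.
  by rewrite [(x + k)^T]linearD /= mulmxDl xv0 kv0 addr0 mxE.
Qed.

End Projection.

(* Indeed the lifted
   point y of [feasible_lift] is orthogonal to ker S, has |y| >= 1, and
   y^T S y = y^T (A D A^T) y = x^T (A D A^T) x. *)
Lemma lambda_le_objective (R : rcfType) (m n p : nat)
    (A : 'M[R]_(m, n)) (D : 'M[R]_n) (C : 'M[R]_(m, p))
    (x : 'cV[R]_m) (c : 'cV[R]_n) (e : 'cV[R]_p) (lam : R) :
  (forall i j : 'I_n, i != j -> D i j = 0) -> (forall i : 'I_n, 0 < D i i) ->
  (forall b : 'cV_p, (exists g : 'cV_n, C *m b = A *m g) -> b = 0) ->
  x = A *m c + C *m e -> (forall k, 0 <= e k 0) -> (forall k, (C^T *m x) k 0 <= 0) ->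
  (x^T *m x) 0 0 = 1 -> is_lambda_min_pp (A *m D *m A^T + C *m C^T) lam ->
  lam <= (x^T *m (A *m D *m A^T) *m x) 0 0.
Proof.
move=> D_diag D_pos C_indep xE e_ge0 Cx_le0 x_unit lam_pp.
set M := A *m D *m A^T; set S := M + C *m C^T.
have [y [Ayx Cy x_le_y y_orth]] := feasible_lift C_indep xE e_ge0 Cx_le0.
have S_sym : S^T = S by apply: gram_sum_sym.
have y_ker_orth (v : 'cV_m) : S *m v = 0 -> (y^T *m v) 0 0 = 0.
  move=> Sv0; have vS0 : v^T *m S = 0 by rewrite -S_sym -trmx_mul Sv0 trmx0.
  have [vA0 vC0] := gram_sum_kernel D_diag D_pos vS0.
  by apply: y_orth; apply: trmx_inj; rewrite trmx_mul trmxK trmx0.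
have lam_y :=
  lambda_min_pp_ker_orth S_sym (gram_sum_psd A D_diag D_pos C) lam_pp y_ker_orth.
have yS_eq : (y^T *m S *m y) 0 0 = (x^T *m M *m x) 0 0.
  have M_sym : M^T = M by rewrite /M !trmx_mul trmxK diag_sym // mulmxA.
  rewrite -(quad_ker_invariant M_sym (_ : M *m (y - x) = 0)); last first.
    by rewrite /M -mulmxA Ayx mulmx0.
  have yCCy : y^T *m (C *m C^T) *m y = 0 by rewrite -!mulmxA Cy !mulmx0.
  by rewrite /S mulmxDr mulmxDl yCCy addr0.
have lam_gt0 : 0 < lam by case: lam_pp.
rewrite -yS_eq; apply: le_trans lam_y; rewrite -{1}[lam]mulr1.
by apply: ler_wpM2l; [exact: ltW | rewrite -x_unit].
Qed.

Theorem mainTheorem15 (R : rcfType) (m n l : nat)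
  (A : 'M[R]_(m, n)) (B : 'M[R]_(m, l)) (D : 'M[R]_n)
  (hA : A != 0)
  (hDdiag : forall i j : 'I_n, i != j -> D i j = 0)
  (hDpos : forall i : 'I_n, 0 < D i i) :
  let r := (\rank (row_mx A B) - \rank A)%N in
  let M := A *m D *m A^T in
  (* the admissible submatrices C: column subsets J with r <= p = #|J| (<= l) *)
  let adm := fun J : {set 'I_l} => (r <= #|J|)%N in
  (forall J, adm J -> exists lam,
     is_lambda_min_pp (M + colsubset B J *m (colsubset B J)^T) lam) /\
  exists vmin : R,
    [/\ (* vmin is the minimum defining v_min *)
        (exists2 J, adm J &
           is_lambda_min_pp (M + colsubset B J *m (colsubset B J)^T) vmin),
        (forall J lam, adm J ->
           is_lambda_min_pp (M + colsubset B J *m (colsubset B J)^T) lam ->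
           vmin <= lam),
        (* v_min > 0 *)
        0 < vmin &
        (* v >= v_min: every feasible point has objective value >= v_min *)
        forall (c : 'cV[R]_n) (d : 'cV[R]_l),
          let x := A *m c + B *m d in
          norm2 x = 1 ->
          (forall j : 'I_l, (B^T *m x) j 0 <= 0) ->
          (forall j : 'I_l, 0 <= d j 0) ->
          vmin <= (x^T *m M *m x) 0 0].
Proof.
move=> r M adm.
have lam_exists J : exists lam,
    is_lambda_min_pp (M + colsubset B J *m (colsubset B J)^T) lam.
  apply: lambda_min_pp_exists; first exact: gram_sum_sym.
    exact: gram_sum_psd.
  exact: gram_sum_neq0.
split=> [J _|]; first exact: lam_exists.
have [lamJ lamJ_pp] := fin_all_exists lam_exists.
have adm_all : adm setT.
  apply: rank_gap_le => j; exists 0, (delta_mx j 0); split=> [i|]; first by rewrite inE.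
  by rewrite mulmx0 add0r colE.
have [J0 adm_J0 J0_min] := arg_minP lamJ adm_all.
exists (lamJ J0); split=> [|J lam adm_J lam_pp| |c d x x_norm Bx_le0 d_ge0].
- by exists J0.
- by rewrite (lambda_min_pp_unique lam_pp (lamJ_pp J)); apply: J0_min.
- by case: (lamJ_pp J0).
- have [J [c' [e [adm_J xE e_ge0 indep_J]]]] := feasible_reduction A B c d_ge0.
  apply: le_trans (J0_min J adm_J) _.
  apply: lambda_le_objective hDdiag hDpos indep_J xE e_ge0 _ (norm2_eq1 x_norm) _ => //.
  by move=> k; rewrite colsubset_trmx_mul.
Qed.
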